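(* For the $2$-state GM+I model on binary 4-taxon trees (the three trees $T_{ab|cd}$, $T_{ac|bd}$, $T_{ad|bc}$ on taxa $a,b,c,d$), the tree parameter is generically identifiable.
   Context: For a binary $n$-taxon tree $T$ (leaves labeled by the taxa, internal vertices of valence 3) with edge set $E$, the $\kappa$-state GM+I model has parameters $\mathbf s=(\delta,\pi_I,\pi_{GM},(M_e)_{e\in E})$: $\delta\in[0,1]$, probability vectors $\pi_I,\pi_{GM}\in[0,1]^\kappa$ ($\pi_{GM}$ the distribution at a chosen root $r$), and $\kappa\times\kappa$ Markov matrices $M_e$ for edges $e$ directed away from $r$. These form a stochastic parameter space $S_T\subseteq\mathbb R^N$, $N=2\kappa-1+|E|\kappa(\kappa-1)$. The joint leaf distribution $P=\phi_T(\mathbf s)$ has entries $p_{i_1\dots i_n}=\delta\,\epsilon(i_1,\dots,i_n)\pi_I(i_1)+(1-\delta)\sum_{(j_v)}\pi_{GM}(j_r)\prod_{e=(u\to w)}M_e(j_u,j_w)$, with $\epsilon=1$ if all indices equal and $0$ otherwise, the sum over all state assignments to vertices extending the leaf states. The tree parameter is generically identifiable for a collection of trees if for each tree $T$ there is a proper algebraic variety $X_T\subsetneq\mathbb C^N$ such that whenever $P\in\bigcup_T\phi_T(S_T\setminus X_T)$, there is a unique tree $T$ with $P\in\phi_T(S_T\setminus X_T)$. *)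

From mathcomp Require Import all_boot all_order all_algebra.
From mathcomp Require Import reals.
From mathcomp Require Import complex.
From mathcomp Require Import mpoly.

Set Implicit Arguments.
Unset Strict Implicit.
Unset Printing Implicit Defensive.

Import GRing.Theory Num.Theory.
Local Open Scope ring_scope.

(* Number of edges |E| = 5, so N = 2*2-1 + 5*2*(2-1) = 13.             *)

Inductive quartet := T_ab_cd | T_ac_bd | T_ad_bc.

Definition Npar : nat := 13.

Definition param (R : Type) := 'I_Npar -> R.

(* Coordinate conventions:
     s 0            = delta
     s 1            = pi_I(0)        (pi_I(1)  = 1 - s 1)
     s 2            = pi_GM(0)       (pi_GM(1) = 1 - s 2)
     s (3 + 2e + i) = M_e(i,0)       (M_e(i,1) = 1 - s(3+2e+i)),  e < 5, i < 2
   Each tree has two internal vertices u (the root r) and v; the edges are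
     e = 0 : u -> first leaf of the cherry at u
     e = 1 : u -> second leaf of the cherry at u
     e = 2 : u -> v
     e = 3 : v -> first leaf of the cherry at v
     e = 4 : v -> second leaf of the cherry at v. *)
Section Model.
Variable R : realType.
Implicit Types (s : param R).

Definition coord s (k : nat) : R := s (inord k).

Definition delta s : R := coord s 0.

Definition piI s (i : 'I_2) : R :=
  if i == 0 :> nat then coord s 1 else 1 - coord s 1.

Definition piGM s (i : 'I_2) : R :=
  if i == 0 :> nat then coord s 2 else 1 - coord s 2.

Definition Medge s (e : 'I_5) (i j : 'I_2) : R :=
  let x := coord s (3 + 2 * e + i) in
  if j == 0 :> nat then x else 1 - x.

Definition in01 (x : R) := 0 <= x <= 1.

Definition stochastic s : Prop :=
  [/\ in01 (delta s),
      (forall i, in01 (piI s i)),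
      (forall i, in01 (piGM s i)) &
      (forall e i j, in01 (Medge s e i j))].

Definition gm_quartet s (x1 x2 x3 x4 : 'I_2) : R :=
  \sum_(ju < 2) \sum_(jv < 2)
     piGM s ju * Medge s 0 ju x1 * Medge s 1 ju x2 * Medge s 2 ju jv
       * Medge s 3 jv x3 * Medge s 4 jv x4.

Definition eps4 (ia ib ic id : 'I_2) : R :=
  if [&& ia == ib, ib == ic & ic == id] then 1 else 0.

(* Joint leaf distribution, as a function of the states at a, b, c, d. *)
Definition leafdist := 'I_2 -> 'I_2 -> 'I_2 -> 'I_2 -> R.

Definition phi (T : quartet) s : leafdist :=
  fun ia ib ic id =>
    delta s * eps4 ia ib ic id * piI s ia
    + (1 - delta s) *
      match T with
      | T_ab_cd => gm_quartet s ia ib ic id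
      | T_ac_bd => gm_quartet s ia ic ib id
      | T_ad_bc => gm_quartet s ia id ib ic
      end.

End Model.

Definition in_variety (R : realType) (F : seq {mpoly R[i][Npar]})
  (z : 'I_Npar -> R[i]) : Prop :=
  forall f, f \in F -> f.@[z] = 0.

Definition proper_variety (R : realType) (F : seq {mpoly R[i][Npar]}) : Prop :=
  exists z : 'I_Npar -> R[i], ~ in_variety F z.

Definition realC (R : realType) (s : param R) : 'I_Npar -> R[i] :=
  fun k => Complex (s k) 0.

Definition in_generic_image (R : realType) (X : quartet -> seq {mpoly R[i][Npar]})
  (T : quartet) (P : leafdist R) : Prop :=
  exists s : param R,
    [/\ stochastic s, ~ in_variety (X T) (realC s) & P = phi T s].

From Pilot Require Import Defs.
From mathcomp Require Import all_boot all_order all_algebra.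
From mathcomp Require Import reals complex mpoly.
From mathcomp Require Import ring.

Set Implicit Arguments.
Unset Strict Implicit.
Unset Printing Implicit Defensive.
Import GRing.Theory.
Local Open Scope ring_scope.

(* For a tree T, flattening a general Markov distribution along the split of
   T gives a 4 x 4 matrix of rank at most 2, so all its 3 x 3 minors vanish.
   The invariant-site component only changes the entries (00,00) and (11,11),
   hence the 3 x 3 minor avoiding row 00 and column 11 vanishes on the whole
   GM+I model of T.  Take X_T to be the zero set of the product of the
   corresponding minors for the two other splits: it is proper because this
   product is nonzero at one explicit integer parameter, and a distribution
   phi_T(s) with s outside X_T cannot come from another tree T', since the
   minor of T' would then vanish at it. *)

Lemma det_mx33 (R : comNzRingType) (f : nat -> nat -> R) :
  \det (\matrix_(i < 3, j < 3) f i j) =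
    f 0%N 0%N * (f 1%N 1%N * f 2%N 2%N - f 1%N 2%N * f 2%N 1%N)
  - f 0%N 1%N * (f 1%N 0%N * f 2%N 2%N - f 1%N 2%N * f 2%N 0%N)
  + f 0%N 2%N * (f 1%N 0%N * f 2%N 1%N - f 1%N 1%N * f 2%N 0%N).
Proof.
rewrite (expand_det_row _ ord0) !big_ord_recl big_ord0 /cofactor.
rewrite !(expand_det_row _ ord0) !big_ord_recl !big_ord0 /cofactor.
by rewrite !det_mx11 !mxE /bump /=; ring.
Qed.

Lemma det_mulmx_thin (R : comNzRingType) n (B : 'M[R]_(n.+1, n))
    (C : 'M[R]_(n, n.+1)) :
  \det (B *m C) = 0.
Proof.
have -> : B *m C = row_mx 0 B *m col_mx (0 : 'M_(1, n.+1)) C.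
  by rewrite mul_row_col mul0mx add0r.
rewrite det_mulmx.
have -> : \det (row_mx (0 : 'M_(n.+1, 1)) B : 'M_(n.+1)) = 0.
  rewrite (expand_det_col _ (lshift n (ord0 : 'I_1) : 'I_n.+1)) big1 // => i _.
  by rewrite (row_mxEl (0 : 'M_(n.+1, 1))) mxE mul0r.
by rewrite mul0r.
Qed.

Definition quartet_table (A : Type) := 'I_2 -> 'I_2 -> 'I_2 -> 'I_2 -> A.

(* The GM+I parametrization over any commutative ring, so that it can be
   evaluated at polynomials and at integers; coordinates are indexed by nat
   and [phi T s] is convertible to [gphi (coord s) T]. *)
Section GenericModel.
Variable A : comNzRingType.
Implicit Types (x : nat -> A) (P : quartet_table A).

Definition gdelta x : A := x 0%N.

Definition gpiI x (i : 'I_2) : A :=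
  if i == 0 :> nat then x 1%N else 1 - x 1%N.

Definition gpiGM x (i : 'I_2) : A :=
  if i == 0 :> nat then x 2%N else 1 - x 2%N.

Definition gMedge x (e : 'I_5) (i j : 'I_2) : A :=
  let y := x (3 + 2 * e + i)%N in
  if j == 0 :> nat then y else 1 - y.

Definition ggm_quartet x (x1 x2 x3 x4 : 'I_2) : A :=
  \sum_(ju < 2) \sum_(jv < 2)
     gpiGM x ju * gMedge x 0 ju x1 * gMedge x 1 ju x2 * gMedge x 2 ju jv
       * gMedge x 3 jv x3 * gMedge x 4 jv x4.

Definition geps4 (ia ib ic id : 'I_2) : A :=
  if [&& ia == ib, ib == ic & ic == id] then 1 else 0.

Definition gphi x (T : quartet) : quartet_table A :=
  fun ia ib ic id =>
    gdelta x * geps4 ia ib ic id * gpiI x ia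
    + (1 - gdelta x) *
      match T with
      | T_ab_cd => ggm_quartet x ia ib ic id
      | T_ac_bd => ggm_quartet x ia ic ib id
      | T_ad_bc => ggm_quartet x ia id ib ic
      end.

(* Renames the taxa so that the split of T becomes ab|cd. *)
Definition relabel (T : quartet) P : quartet_table A :=
  fun a b c d =>
    match T with
    | T_ab_cd => P a b c d
    | T_ac_bd => P a c b d
    | T_ad_bc => P a c d b
    end.

Lemma relabel_gphi x T a b c d :
  relabel T (gphi x T) a b c d = gphi x T_ab_cd a b c d.
Proof.
case: T => //=; rewrite /gphi /geps4; congr (gdelta x * _ * _ + _);
  apply: (congr1 (fun t : bool => if t then 1 else 0));
  by apply/idP/idP => /and3P[/eqP-> /eqP-> /eqP->]; rewrite !eqxx.
Qed.

(* The rows avoid the states 00 and the columns avoid 11, so the minor misses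
   both entries touched by the invariant-site component. *)
Definition row_state (i : nat) : 'I_2 * 'I_2 :=
  match i with 0 => (0, 1) | 1 => (1, 0) | _ => (1, 1) end.

Definition col_state (j : nat) : 'I_2 * 'I_2 :=
  match j with 0 => (0, 0) | 1 => (0, 1) | _ => (1, 0) end.

Definition flattening_entry P (i j : nat) : A :=
  P (row_state i).1 (row_state i).2 (col_state j).1 (col_state j).2.

Definition split_minor (T : quartet) P : A :=
  \det (\matrix_(i < 3, j < 3) flattening_entry (relabel T P) i j).

Definition rival_minors (T : quartet) P : A :=
  match T with
  | T_ab_cd => split_minor T_ac_bd P * split_minor T_ad_bc P
  | T_ac_bd => split_minor T_ab_cd P * split_minor T_ad_bc P
  | T_ad_bc => split_minor T_ab_cd P * split_minor T_ac_bd P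
  end.

Lemma rival_minors_eq0 T T' P :
  split_minor T' P = 0 -> T = T' \/ rival_minors T P = 0.
Proof.
case: T; case: T' => /= minor0; by [left | right; rewrite minor0 ?mul0r ?mulr0].
Qed.

Definition gm_cherry_u x : 'M[A]_(3, 2) :=
  \matrix_(i, k) \sum_(ju < 2) gpiGM x ju * gMedge x 0 ju (row_state i).1
                    * gMedge x 1 ju (row_state i).2 * gMedge x 2 ju k.

Definition gm_cherry_v x : 'M[A]_(2, 3) :=
  \matrix_(k, j) (gMedge x 3 k (col_state j).1 * gMedge x 4 k (col_state j).2).

Lemma flattening_gphi x :
  \matrix_(i < 3, j < 3) flattening_entry (gphi x T_ab_cd) i j
  = (1 - gdelta x) *: (gm_cherry_u x *m gm_cherry_v x).
Proof.
apply/matrixP => i j; rewrite !mxE /flattening_entry /gphi.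
have -> : geps4 (row_state i).1 (row_state i).2
                (col_state j).1 (col_state j).2 = 0.
  by case: i j => [[|[|[|i]]] ?] [[|[|[|j]]] ?].
rewrite mulr0 mul0r add0r /ggm_quartet exchange_big; congr (_ * _).
apply: eq_bigr => jv _; rewrite !mxE mulr_suml.
by apply: eq_bigr => ju _; rewrite !mulrA.
Qed.

Lemma split_minor_gphi x T : split_minor T (gphi x T) = 0.
Proof.
rewrite /split_minor.
have -> : \matrix_(i < 3, j < 3) flattening_entry (relabel T (gphi x T)) i j
          = \matrix_(i < 3, j < 3) flattening_entry (gphi x T_ab_cd) i j.
  by apply/matrixP => i j; rewrite !mxE /flattening_entry relabel_gphi.
by rewrite flattening_gphi detZ det_mulmx_thin mulr0.
Qed.

End GenericModel.

Section RingMorphism.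
Variables (A B : comNzRingType) (f : {rmorphism A -> B}).

Lemma rmorph_gphi (x : nat -> A) (y : nat -> B) T a b c d :
  (forall k, f (x k) = y k) -> f (gphi x T a b c d) = gphi y T a b c d.
Proof.
move=> fxy.
have f1B k : f (1 - x k) = 1 - y k by rewrite rmorphB rmorph1 fxy.
have fpiI i : f (gpiI x i) = gpiI y i by rewrite /gpiI; case: ifP.
have fpiGM i : f (gpiGM x i) = gpiGM y i by rewrite /gpiGM; case: ifP.
have fM e i j : f (gMedge x e i j) = gMedge y e i j.
  by rewrite /gMedge; case: ifP.
have feps i1 i2 i3 i4 : f (geps4 A i1 i2 i3 i4) = geps4 B i1 i2 i3 i4.
  by rewrite /geps4; case: ifP; rewrite ?rmorph1 ?rmorph0.
have fgm i1 i2 i3 i4 : f (ggm_quartet x i1 i2 i3 i4) = ggm_quartet y i1 i2 i3 i4.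
  rewrite rmorph_sum; apply: eq_bigr => ju _.
  by rewrite rmorph_sum; apply: eq_bigr => jv _; rewrite !rmorphM fpiGM !fM.
rewrite /gphi /gdelta rmorphD !rmorphM f1B fxy fpiI feps.
by case: T; rewrite fgm.
Qed.

Lemma rmorph_split_minor T (P : quartet_table A) (Q : quartet_table B) :
  (forall a b c d, f (P a b c d) = Q a b c d) ->
  f (split_minor T P) = split_minor T Q.
Proof.
move=> fPQ; rewrite /split_minor -det_map_mx; congr (\det _).
by apply/matrixP => i j; rewrite !mxE /flattening_entry; case: T; apply: fPQ.
Qed.

Lemma rmorph_rival_minors (x : nat -> A) (y : nat -> B) T :
  (forall k, f (x k) = y k) ->
  f (rival_minors T (gphi x T)) = rival_minors T (gphi y T).
Proof.
move=> fxy.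
have fminor T' : f (split_minor T' (gphi x T)) = split_minor T' (gphi y T).
  by apply: rmorph_split_minor => a b c d; apply: rmorph_gphi.
by case: T fminor => fminor; rewrite /rival_minors rmorphM !fminor.
Qed.

End RingMorphism.

Lemma phi_gphi (R : realType) T (s : param R) : phi T s = gphi (Defs.coord s) T.
Proof. by []. Qed.

Lemma sum_ord2 (V : nmodType) (F : 'I_2 -> V) : \sum_(i < 2) F i = F 0 + F 1.
Proof. by rewrite big_ord_recl big_ord1; congr (F _ + F _); apply: val_inj. Qed.

Definition witness (k : nat) : int :=
  nth 0 [:: 0; 0; -1; 2; 1; 1; 0; 2; 2; 2; 1; 1; 0] k.

Lemma witness_inord k : witness (@inord 12 k) = witness k.
Proof.
have [k_small | k_large] := ltnP k 13; first by rewrite inordK.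
rewrite /inord /insubd insubN -?ltnNge //.
by rewrite [RHS]nth_default.
Qed.

Lemma rival_minors_witness T : rival_minors T (gphi witness T) != 0.
Proof.
case: T; rewrite /rival_minors /split_minor !det_mx33 /flattening_entry.
(* bigops are locked, so the sums are expanded before computing *)
all: by rewrite /relabel /gphi /ggm_quartet !sum_ord2; vm_compute.
Qed.

Theorem corollary7 (R : realType) :
  exists X : quartet -> seq {mpoly R[i][Npar]},
    (forall T, proper_variety (X T)) /\
    (forall P : leafdist R,
        (exists T, in_generic_image X T P) ->
        exists! T, in_generic_image X T P).
Proof.
pose Xs (k : nat) : {mpoly R[i][Npar]} := 'X_(inord k).
exists (fun T => [:: rival_minors T (gphi Xs T)]).
have eval_rival T z : (rival_minors T (gphi Xs T)).@[z]
                      = rival_minors T (gphi (fun k => z (inord k)) T).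
  by apply: (rmorph_rival_minors (f := meval z)) => k; exact: mevalXU.
have eval_real T (s : param R) : (rival_minors T (gphi Xs T)).@[realC s]
                                 = real_complex R (rival_minors T (phi T s)).
  rewrite eval_rival phi_gphi; symmetry.
  by apply: rmorph_rival_minors => k; reflexivity.
split.
- move=> T; exists (fun k : 'I_Npar => (witness k)%:~R).
  move=> /(_ _ (mem_head _ _)); rewrite eval_rival.
  rewrite -(rmorph_rival_minors (f := intr) (x := witness)) => [/eqP|k].
    by rewrite intr_eq0 (negbTE (rival_minors_witness T)).
  by rewrite witness_inord.
- move=> P [T [s [s_stoch s_generic ->]]]; exists T; split; first by exists s.
  move=> T' [s' [_ _ phiE]].
  have minor0 : split_minor T' (phi T s) = 0.
    by rewrite phiE phi_gphi split_minor_gphi.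
  have [//|rival0] := rival_minors_eq0 T minor0.
  case: s_generic => p; rewrite inE => /eqP ->.
  by rewrite eval_real rival0 rmorph0.
Qed.
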